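(* Let $a>0$ and let $L_3=a\mathbb{Z}^3\cup a(\mathbb{Z}+\tfrac12)^3\cup W\cup\Lambda$. The Voronoi cell of the origin with respect to $L_3$ is the regular octahedron $$\{(x,y,z)\in\mathbb{R}^3:\ |x|+|y|+|z|\le \tfrac{5a}{16}\},$$ whose volume is $$V^{(3)}_\Gamma=\frac{125}{3072}a^3 .$$ The same holds, after translation, for every point of $a\mathbb{Z}^3\cup a(\mathbb{Z}+\tfrac12)^3$.
   Context: Fix $a>0$. $W\subset\mathbb{R}^3$ is the set of all points $a(u_1,u_2,u_3)$ such that $(u_1,u_2,u_3)$ is a permutation of a triple $(i,\ j+\tfrac12,\ k+\varepsilon)$ with $i,j,k\in\mathbb{Z}$ and $\varepsilon\in\{\tfrac14,\tfrac34\}$. $\Lambda=\{p+\tfrac{5a}{24}(s_1,s_2,s_3): p\in a\mathbb{Z}^3\cup a(\mathbb{Z}+\tfrac12)^3,\ s_i\in\{-1,1\}\}$. For a discrete set $P\subset\mathbb{R}^3$ and $p\in P$, the Voronoi cell of $p$ with respect to $P$ is $\{x\in\mathbb{R}^3: |x-p|\le|x-q|\ \text{for all } q\in P\}$. *)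

From Stdlib Require Import Reals ClassicalEpsilon.
Open Scope R_scope.

Definition pt := (R * R * R)%type.

Definition px (p : pt) : R := fst (fst p).
Definition py (p : pt) : R := snd (fst p).
Definition pz (p : pt) : R := snd p.

Definition dist3 (p q : pt) : R :=
  sqrt ((px p - px q)^2 + (py p - py q)^2 + (pz p - pz q)^2).

Definition BCC (a : R) (p : pt) : Prop :=
  exists i j k : Z,
    p = (a * IZR i, a * IZR j, a * IZR k) \/
    p = (a * (IZR i + 1/2), a * (IZR j + 1/2), a * (IZR k + 1/2)).

Definition perm3 (u1 u2 u3 t1 t2 t3 : R) : Prop :=
  (u1 = t1 /\ u2 = t2 /\ u3 = t3) \/ (u1 = t1 /\ u2 = t3 /\ u3 = t2) \/
  (u1 = t2 /\ u2 = t1 /\ u3 = t3) \/ (u1 = t2 /\ u2 = t3 /\ u3 = t1) \/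
  (u1 = t3 /\ u2 = t1 /\ u3 = t2) \/ (u1 = t3 /\ u2 = t2 /\ u3 = t1).

Definition Wset (a : R) (p : pt) : Prop :=
  exists (u1 u2 u3 : R) (i j k : Z) (eps : R),
    (eps = 1/4 \/ eps = 3/4) /\
    perm3 u1 u2 u3 (IZR i) (IZR j + 1/2) (IZR k + eps) /\
    p = (a * u1, a * u2, a * u3).

Definition Lam (a : R) (p : pt) : Prop :=
  exists (q : pt) (s1 s2 s3 : R),
    BCC a q /\ (s1 = -1 \/ s1 = 1) /\ (s2 = -1 \/ s2 = 1) /\ (s3 = -1 \/ s3 = 1) /\
    p = (px q + 5 * a / 24 * s1, py q + 5 * a / 24 * s2, pz q + 5 * a / 24 * s3).

Definition L3 (a : R) (p : pt) : Prop := BCC a p \/ Wset a p \/ Lam a p.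

Definition voronoi (P : pt -> Prop) (p : pt) (x : pt) : Prop :=
  forall q : pt, P q -> dist3 x p <= dist3 x q.

Definition indic (S : pt -> Prop) (x : pt) : R :=
  if excluded_middle_informative (S x) then 1 else 0.

(* Volume of S, for S contained in the cube with center c and half side B,
   defined as the iterated Riemann integral (dz, then dy, then dx) of the
   indicator of S over that cube; vol3 S c B v says all the iterated
   integrals exist and the result is v. *)
Definition vol3 (S : pt -> Prop) (c : pt) (B v : R) : Prop :=
  exists (F : R -> R -> R) (G : R -> R),
    (forall x y : R, exists pr : Riemann_integrable (fun z => indic S (x, y, z))
                                   (pz c - B) (pz c + B), RiemannInt pr = F x y) /\
    (forall x : R, exists pr : Riemann_integrable (F x) (py c - B) (py c + B),
                     RiemannInt pr = G x) /\
    (exists pr : Riemann_integrable G (px c - B) (px c + B), RiemannInt pr = v).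

From Stdlib Require Import Reals Lra Psatz ZArith ClassicalEpsilon.
From Coquelicot Require Import Coquelicot.
Open Scope R_scope.

(* Writing points as a*u, the origin's cell is the intersection of the half-spaces
   2 x.q <= |q|^2 over q in L3 (closer_to_origin).
   - The eight points a(5/24)(+-1,+-1,+-1) of Lambda give the facets of the octahedron:
     their half-spaces are exactly s.x <= 5a/16.
   - Conversely, every point a*u of L3 satisfies the coordinate bound
     (5/8)|u_i| <= |u|^2 for each i (coord_bound_BCC / _W / _Lam, by an analysis of
     the coordinate classes Z, Z+1/2, Z+{1/4,3/4}), and this bound says precisely that
     the octahedron lies in the half-space of a*u (octahedron_in_halfspace).
   Translations by BCC vectors preserve L3 (L3_add), so every BCC point has the
   translated cell. *)

Ltac rabs := unfold Rabs, Rmax in *; repeat match goal with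
  | |- context[Rcase_abs ?t] => destruct (Rcase_abs t)
  | H : context[Rcase_abs ?t] |- _ => destruct (Rcase_abs t)
  | |- context[Rle_dec ?x ?y] => destruct (Rle_dec x y)
  | H : context[Rle_dec ?x ?y] |- _ => destruct (Rle_dec x y)
  end.

Definition dot3 (p q : pt) : R := px p * px q + py p * py q + pz p * pz q.

Lemma sum_sq3_nonneg u v w : 0 <= u ^ 2 + v ^ 2 + w ^ 2.
Proof. pose proof (pow2_ge_0 u); pose proof (pow2_ge_0 v); pose proof (pow2_ge_0 w); lra. Qed.

Lemma closer_to_origin (x q : pt) :
  dist3 x (0, 0, 0) <= dist3 x q <-> 2 * dot3 x q <= dot3 q q.
Proof.
  destruct x as [[x1 x2] x3], q as [[q1 q2] q3].
  unfold dist3, dot3, px, py, pz; cbn [fst snd]. split; intros H.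
  - apply sqrt_le_0 in H; [nra | apply sum_sq3_nonneg | apply sum_sq3_nonneg].
  - apply sqrt_le_1_alt; nra.
Qed.

(* fits v rest: the coordinate v of a vector whose other squared coordinates sum to
   rest satisfies (5/8)|v| <= |u|^2.  Since (5/8)m - m^2 <= 25/256 and is decreasing
   for m >= 5/16, three criteria cover all cases below. *)
Definition fits (v rest : R) : Prop := 5/8 * Rabs v <= v ^ 2 + rest.

Lemma fits_abs v rest : fits v rest <-> 5/8 * Rabs v <= Rabs v ^ 2 + rest.
Proof. unfold fits; rewrite pow2_abs; reflexivity. Qed.

Lemma fits_far v rest : 0 <= rest -> v = 0 \/ 5/8 <= Rabs v -> fits v rest.
Proof.
  intros Hr [-> | Hv]; apply fits_abs; [rewrite Rabs_R0; lra | pose proof (Rabs_pos v); nra].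
Qed.

Lemma fits_large_rest v rest : 25/256 <= rest -> fits v rest.
Proof. intros Hr; apply fits_abs; pose proof (pow2_ge_0 (Rabs v - 5/16)); nra. Qed.

Lemma fits_tail v rest al : 5/16 <= al <= Rabs v -> 5/8 * al - al ^ 2 <= rest ->
  fits v rest.
Proof. intros Hal Hr; apply fits_abs; nra. Qed.

Lemma sq_ge v al : 0 <= al -> al <= Rabs v -> al ^ 2 <= v ^ 2.
Proof. intros Hal Hv; rewrite <- (pow2_abs v); nra. Qed.

Definition isZ (v : R) : Prop := exists i : Z, v = IZR i.
Definition isH (v : R) : Prop := exists i : Z, v = IZR i + 1/2.
Definition isQ (v : R) : Prop := exists i : Z, v = IZR i + 1/4 \/ v = IZR i + 3/4.

Lemma IZR_cases (i : Z) : IZR i = 0 \/ 1 <= IZR i \/ IZR i <= -1.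
Proof.
  destruct (Z.lt_trichotomy i 0) as [h|[h|h]].
  - right; right. apply IZR_le. lia.
  - left; subst; reflexivity.
  - right; left. apply IZR_le. lia.
Qed.

Lemma isZ_abs v : isZ v -> v = 0 \/ 1 <= Rabs v.
Proof. intros [i ->]; destruct (IZR_cases i) as [h|[h|h]]; [left | right..]; rabs; lra. Qed.

Lemma isH_abs v : isH v -> 1/2 <= Rabs v.
Proof. intros [i ->]; destruct (IZR_cases i) as [h|[h|h]]; rabs; lra. Qed.

Lemma isQ_abs v : isQ v -> 1/4 <= Rabs v.
Proof. intros [i [-> | ->]]; destruct (IZR_cases i) as [h|[h|h]]; rabs; lra. Qed.

Definition sign (s : R) : Prop := s = -1 \/ s = 1.

Lemma shifted_isZ_abs n s : isZ n -> sign s ->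
  Rabs (n + 5/24 * s) = 5/24 \/ 19/24 <= Rabs (n + 5/24 * s).
Proof. intros [i ->] [-> | ->]; destruct (IZR_cases i) as [h|[h|h]]; rabs; lra. Qed.

Lemma shifted_isH_abs n s : isH n -> sign s -> 7/24 <= Rabs (n + 5/24 * s).
Proof. intros [i ->] [-> | ->]; destruct (IZR_cases i) as [h|[h|h]]; rabs; lra. Qed.

Lemma addZZ x y : isZ x -> isZ y -> isZ (x + y).
Proof. intros [i ->] [j ->]; exists (i + j)%Z; rewrite plus_IZR; ring. Qed.
Lemma addHZ x y : isH x -> isZ y -> isH (x + y).
Proof. intros [i ->] [j ->]; exists (i + j)%Z; rewrite plus_IZR; ring. Qed.
Lemma addZH x y : isZ x -> isH y -> isH (x + y).
Proof. intros [i ->] [j ->]; exists (i + j)%Z; rewrite plus_IZR; ring. Qed.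
Lemma addHH x y : isH x -> isH y -> isZ (x + y).
Proof. intros [i ->] [j ->]; exists (i + j + 1)%Z; rewrite !plus_IZR; simpl; field. Qed.
Lemma addQZ x y : isQ x -> isZ y -> isQ (x + y).
Proof. intros [i [-> | ->]] [j ->]; exists (i + j)%Z; rewrite plus_IZR; [left|right]; ring. Qed.
Lemma addQH x y : isQ x -> isH y -> isQ (x + y).
Proof.
  intros [i [-> | ->]] [j ->].
  - exists (i + j)%Z; rewrite plus_IZR; right; field.
  - exists (i + j + 1)%Z; rewrite !plus_IZR; left; simpl; field.
Qed.
Lemma negZ x : isZ x -> isZ (- x).
Proof. intros [i ->]; exists (- i)%Z; rewrite opp_IZR; ring. Qed.
Lemma negH x : isH x -> isH (- x).
Proof. intros [i ->]; exists (- i - 1)%Z; rewrite minus_IZR, opp_IZR; simpl; field. Qed.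

Definition tri (a u1 u2 u3 : R) : pt := (a * u1, a * u2, a * u3).

Definition BCCc (u1 u2 u3 : R) : Prop :=
  (isZ u1 /\ isZ u2 /\ isZ u3) \/ (isH u1 /\ isH u2 /\ isH u3).

Definition Wc (u1 u2 u3 : R) : Prop :=
  (isZ u1 /\ isH u2 /\ isQ u3) \/ (isZ u1 /\ isQ u2 /\ isH u3) \/
  (isH u1 /\ isZ u2 /\ isQ u3) \/ (isH u1 /\ isQ u2 /\ isZ u3) \/
  (isQ u1 /\ isZ u2 /\ isH u3) \/ (isQ u1 /\ isH u2 /\ isZ u3).

Lemma BCC_iff a p : BCC a p <-> exists u1 u2 u3, p = tri a u1 u2 u3 /\ BCCc u1 u2 u3.
Proof.
  split.
  - intros (i & j & k & [-> | ->]).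
    + exists (IZR i), (IZR j), (IZR k); split; [reflexivity|].
      left; repeat split; eexists; reflexivity.
    + exists (IZR i + 1/2), (IZR j + 1/2), (IZR k + 1/2); split; [reflexivity|].
      right; repeat split; eexists; reflexivity.
  - intros (u1 & u2 & u3 & -> & [([i ->] & [j ->] & [k ->]) | ([i ->] & [j ->] & [k ->])]);
      exists i, j, k; [left|right]; reflexivity.
Qed.

Lemma W_iff a p : Wset a p <-> exists u1 u2 u3, p = tri a u1 u2 u3 /\ Wc u1 u2 u3.
Proof.
  split.
  - intros (u1 & u2 & u3 & i & j & k & eps & He & Hp & ->).
    exists u1, u2, u3; split; [reflexivity|].
    assert (Zi : isZ (IZR i)) by (eexists; reflexivity).
    assert (Hj : isH (IZR j + 1/2)) by (eexists; reflexivity).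
    assert (Qk : isQ (IZR k + eps)) by (exists k; destruct He; subst; auto).
    unfold Wc.
    destruct Hp as [(->&->&->)|[(->&->&->)|[(->&->&->)|[(->&->&->)|[(->&->&->)|(->&->&->)]]]]];
      tauto.
  - intros (u1 & u2 & u3 & -> & Hw). unfold Wset, perm3.
    destruct Hw as [(Z1&H1&Q1)|[(Z1&Q1&H1)|[(H1&Z1&Q1)|[(H1&Q1&Z1)|[(Q1&Z1&H1)|(Q1&H1&Z1)]]]]];
      destruct Z1 as [i Z1]; destruct H1 as [j H1]; destruct Q1 as [k [Q1|Q1]];
      exists u1, u2, u3, i, j, k;
      first [ exists (1/4); split; [lra | split; [rewrite Z1, H1, Q1; tauto | reflexivity]]
            | exists (3/4); split; [lra | split; [rewrite Z1, H1, Q1; tauto | reflexivity]] ].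
Qed.

(* The key inequality: every coordinate satisfies (5/8)|u_i| <= |u|^2.  This is exactly
   what makes the half-space of points closer to 0 than to a*u contain the octahedron
   |x|_1 <= 5a/16, whose support function in direction u is (5a/16) max |u_i|. *)
Definition coord_bound (u1 u2 u3 : R) : Prop :=
  fits u1 (u2 ^ 2 + u3 ^ 2) /\ fits u2 (u1 ^ 2 + u3 ^ 2) /\ fits u3 (u1 ^ 2 + u2 ^ 2).

Lemma coord_bound_swap12 u1 u2 u3 : coord_bound u1 u2 u3 -> coord_bound u2 u1 u3.
Proof. unfold coord_bound, fits; lra. Qed.

Lemma coord_bound_swap23 u1 u2 u3 : coord_bound u1 u2 u3 -> coord_bound u1 u3 u2.
Proof. unfold coord_bound, fits; lra. Qed.

Lemma coord_bound_sym (P : R -> Prop) u1 u2 u3 :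
  (forall v w1 w2, P v -> P w1 -> P w2 -> fits v (w1 ^ 2 + w2 ^ 2)) ->
  P u1 -> P u2 -> P u3 -> coord_bound u1 u2 u3.
Proof. intros HP h1 h2 h3; repeat split; apply HP; assumption. Qed.

Lemma coord_bound_BCC u1 u2 u3 : BCCc u1 u2 u3 -> coord_bound u1 u2 u3.
Proof.
  intros [(h1&h2&h3)|(h1&h2&h3)]; [apply (coord_bound_sym isZ) | apply (coord_bound_sym isH)];
    auto; intros v w1 w2 hv hw1 hw2.
  - apply fits_far; [apply Rplus_le_le_0_compat; apply pow2_ge_0 |].
    destruct (isZ_abs v hv); [left | right]; lra.
  - apply fits_large_rest.
    pose proof (sq_ge w1 (1/2) ltac:(lra) (isH_abs w1 hw1)).
    pose proof (sq_ge w2 (1/2) ltac:(lra) (isH_abs w2 hw2)). lra.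
Qed.

Lemma coord_bound_ZHQ u1 u2 u3 : isZ u1 -> isH u2 -> isQ u3 -> coord_bound u1 u2 u3.
Proof.
  intros h1 h2 h3.
  pose proof (isH_abs u2 h2) as a2; pose proof (isQ_abs u3 h3) as a3.
  pose proof (sq_ge u2 (1/2) ltac:(lra) a2).
  pose proof (sq_ge u3 (1/4) ltac:(lra) a3).
  pose proof (pow2_ge_0 u1).
  split; [|split].
  - apply fits_far; [pose proof (pow2_ge_0 u3); lra |].
    destruct (isZ_abs u1 h1); [left | right]; lra.
  - apply (fits_tail _ _ (1/2)); lra.
  - apply fits_large_rest; lra.
Qed.

Lemma coord_bound_W u1 u2 u3 : Wc u1 u2 u3 -> coord_bound u1 u2 u3.
Proof.
  intros [(h1&h2&h3)|[(h1&h2&h3)|[(h1&h2&h3)|[(h1&h2&h3)|[(h1&h2&h3)|(h1&h2&h3)]]]]].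
  - apply coord_bound_ZHQ; auto.
  - apply coord_bound_swap23, coord_bound_ZHQ; auto.
  - apply coord_bound_swap12, coord_bound_ZHQ; auto.
  - apply coord_bound_swap23, coord_bound_swap12, coord_bound_ZHQ; auto.
  - apply coord_bound_swap12, coord_bound_swap23, coord_bound_ZHQ; auto.
  - apply coord_bound_swap12, coord_bound_swap23, coord_bound_swap12, coord_bound_ZHQ; auto.
Qed.

Lemma coord_bound_Lam d1 d2 d3 s1 s2 s3 : BCCc d1 d2 d3 -> sign s1 -> sign s2 -> sign s3 ->
  coord_bound (d1 + 5/24 * s1) (d2 + 5/24 * s2) (d3 + 5/24 * s3).
Proof.
  intros [(h1&h2&h3)|(h1&h2&h3)] e1 e2 e3.
  - apply (coord_bound_sym (fun w => Rabs w = 5/24 \/ 19/24 <= Rabs w));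
      try apply shifted_isZ_abs; auto.
    intros v w1 w2 hv hw1 hw2.
    assert (b1 : 5/24 <= Rabs w1) by lra. assert (b2 : 5/24 <= Rabs w2) by lra.
    pose proof (sq_ge w1 (5/24) ltac:(lra) b1).
    pose proof (sq_ge w2 (5/24) ltac:(lra) b2).
    destruct hv as [hv | hv].
    + apply fits_abs; rewrite hv; lra.
    + apply fits_far; [lra | right; lra].
  - apply (coord_bound_sym (fun w => 7/24 <= Rabs w)); try apply shifted_isH_abs; auto.
    intros v w1 w2 _ hw1 hw2. apply fits_large_rest.
    pose proof (sq_ge w1 (7/24) ltac:(lra) hw1).
    pose proof (sq_ge w2 (7/24) ltac:(lra) hw2). lra.
Qed.

Lemma L3_coords a q : L3 a q -> exists u1 u2 u3, q = tri a u1 u2 u3 /\ coord_bound u1 u2 u3.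
Proof.
  intros [h|[h|h]].
  - apply BCC_iff in h. destruct h as (u1&u2&u3&->&h).
    exists u1, u2, u3; split; [reflexivity | apply coord_bound_BCC; exact h].
  - apply W_iff in h. destruct h as (u1&u2&u3&->&h).
    exists u1, u2, u3; split; [reflexivity | apply coord_bound_W; exact h].
  - destruct h as (b & s1 & s2 & s3 & hb & e1 & e2 & e3 & ->).
    apply BCC_iff in hb. destruct hb as (d1&d2&d3&->&hd).
    exists (d1 + 5/24 * s1), (d2 + 5/24 * s2), (d3 + 5/24 * s3); split.
    + unfold tri, px, py, pz; cbn [fst snd]. f_equal; [f_equal|]; field.
    + apply coord_bound_Lam; assumption.
Qed.

(* The octahedron |x|_1 <= 5a/16 lies on the origin's side of the bisector of 0 and
   a*u whenever u satisfies the coordinate bound: 2 x.(a u) <= 2 |x|_1 a max|u_i|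
   <= 2 (5a/16) a (8/5) |u|^2 = a^2 |u|^2. *)
Lemma octahedron_in_halfspace a u1 u2 u3 (x : pt) : 0 < a -> coord_bound u1 u2 u3 ->
  Rabs (px x) + Rabs (py x) + Rabs (pz x) <= 5 * a / 16 ->
  2 * dot3 x (tri a u1 u2 u3) <= dot3 (tri a u1 u2 u3) (tri a u1 u2 u3).
Proof.
  intros Ha [g1 [g2 g3]] Hx. unfold fits in *.
  destruct x as [[x1 x2] x3]. unfold dot3, tri, px, py, pz in *; cbn [fst snd] in *.
  set (S := u1 ^ 2 + u2 ^ 2 + u3 ^ 2).
  assert (S0 : 0 <= S) by apply sum_sq3_nonneg.
  assert (Hdot : x1 * u1 + x2 * u2 + x3 * u3 <= a * S / 2).
  { assert (b1 : x1 * u1 <= Rabs x1 * Rabs u1) by (rewrite <- Rabs_mult; apply Rle_abs).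
    assert (b2 : x2 * u2 <= Rabs x2 * Rabs u2) by (rewrite <- Rabs_mult; apply Rle_abs).
    assert (b3 : x3 * u3 <= Rabs x3 * Rabs u3) by (rewrite <- Rabs_mult; apply Rle_abs).
    pose proof (Rabs_pos x1); pose proof (Rabs_pos x2); pose proof (Rabs_pos x3).
    assert (c1 : Rabs x1 * (5/8 * Rabs u1) <= Rabs x1 * S)
      by (apply Rmult_le_compat_l; unfold S; lra).
    assert (c2 : Rabs x2 * (5/8 * Rabs u2) <= Rabs x2 * S)
      by (apply Rmult_le_compat_l; unfold S; lra).
    assert (c3 : Rabs x3 * (5/8 * Rabs u3) <= Rabs x3 * S)
      by (apply Rmult_le_compat_l; unfold S; lra).
    assert (d : (Rabs x1 + Rabs x2 + Rabs x3) * S <= 5 * a / 16 * S)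
      by (apply Rmult_le_compat_r; assumption).
    lra. }
  unfold S in Hdot. nra.
Qed.

Lemma Lam_vertex a s1 s2 s3 : sign s1 -> sign s2 -> sign s3 ->
  L3 a (tri a (5/24 * s1) (5/24 * s2) (5/24 * s3)).
Proof.
  intros e1 e2 e3. right; right. exists (0, 0, 0), s1, s2, s3.
  repeat split; auto.
  - exists 0%Z, 0%Z, 0%Z; left. unfold tri; f_equal; [f_equal|]; ring.
  - unfold tri, px, py, pz; cbn [fst snd]. f_equal; [f_equal|]; field.
Qed.

Lemma sign_of v : exists s, sign s /\ s * v = Rabs v.
Proof.
  destruct (Rle_or_lt 0 v) as [h|h]; [exists 1 | exists (-1)];
    split; unfold sign; rabs; lra.
Qed.

Lemma voronoi_origin a (x : pt) : 0 < a ->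
  voronoi (L3 a) (0, 0, 0) x <-> Rabs (px x) + Rabs (py x) + Rabs (pz x) <= 5 * a / 16.
Proof.
  intros Ha. split.
  - intros H.
    destruct (sign_of (px x)) as (s1 & e1 & E1).
    destruct (sign_of (py x)) as (s2 & e2 & E2).
    destruct (sign_of (pz x)) as (s3 & e3 & E3).
    specialize (H _ (Lam_vertex a s1 s2 s3 e1 e2 e3)).
    apply closer_to_origin in H.
    assert (Hs : s1 ^ 2 = 1 /\ s2 ^ 2 = 1 /\ s3 ^ 2 = 1)
      by (destruct e1, e2, e3; subst; repeat split; ring).
    destruct x as [[x1 x2] x3].
    unfold dot3, tri, px, py, pz in *; cbn [fst snd] in *. nra.
  - intros Hx q Hq. destruct (L3_coords a q Hq) as (u1 & u2 & u3 & -> & g).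
    apply closer_to_origin, octahedron_in_halfspace; assumption.
Qed.

Definition padd (p q : pt) : pt := (px p + px q, py p + py q, pz p + pz q).
Definition pneg (p : pt) : pt := (- px p, - py p, - pz p).
Definition psub (p q : pt) : pt := (px p - px q, py p - py q, pz p - pz q).

Lemma padd_tri a u1 u2 u3 d1 d2 d3 :
  padd (tri a u1 u2 u3) (tri a d1 d2 d3) = tri a (u1 + d1) (u2 + d2) (u3 + d3).
Proof. unfold padd, tri, px, py, pz; cbn [fst snd]. f_equal; [f_equal|]; ring. Qed.

Ltac close_classes :=
  let cls := solve [eauto using addZZ, addZH, addHZ, addHH, addQZ, addQH, negZ, negH] in
  let rec go := match goal with
    | |- ?A \/ ?B => first [left; repeat split; cls | right; go]
    | _ => repeat split; cls end in go.

Lemma BCC_add a p q : BCC a p -> BCC a q -> BCC a (padd q p).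
Proof.
  rewrite !BCC_iff. intros (d1&d2&d3&->&hd) (u1&u2&u3&->&hu).
  rewrite padd_tri. do 3 eexists; split; [reflexivity|].
  unfold BCCc in *.
  destruct hd as [(?&?&?)|(?&?&?)]; destruct hu as [(?&?&?)|(?&?&?)]; close_classes.
Qed.

Lemma BCC_neg a p : BCC a p -> BCC a (pneg p).
Proof.
  rewrite !BCC_iff. intros (d1&d2&d3&->&hd).
  exists (- d1), (- d2), (- d3); split.
  - unfold pneg, tri, px, py, pz; cbn [fst snd]. f_equal; [f_equal|]; ring.
  - unfold BCCc in *. destruct hd as [(?&?&?)|(?&?&?)]; close_classes.
Qed.

Lemma W_add a p q : BCC a p -> Wset a q -> Wset a (padd q p).
Proof.
  rewrite BCC_iff, !W_iff. intros (d1&d2&d3&->&hd) (u1&u2&u3&->&hu).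
  rewrite padd_tri. do 3 eexists; split; [reflexivity|].
  unfold BCCc, Wc in *. destruct hd as [(?&?&?)|(?&?&?)];
  destruct hu as [(?&?&?)|[(?&?&?)|[(?&?&?)|[(?&?&?)|[(?&?&?)|(?&?&?)]]]]]; close_classes.
Qed.

Lemma Lam_add a p q : BCC a p -> Lam a q -> Lam a (padd q p).
Proof.
  intros hp (b & s1 & s2 & s3 & hb & e1 & e2 & e3 & ->).
  exists (padd b p), s1, s2, s3. repeat split; auto.
  - apply BCC_add; assumption.
  - unfold padd, px, py, pz; cbn [fst snd]. f_equal; [f_equal|]; ring.
Qed.

Lemma L3_add a p q : BCC a p -> L3 a q -> L3 a (padd q p).
Proof.
  intros hp [h|[h|h]].
  - left; apply BCC_add; assumption.
  - right; left; apply W_add; assumption.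
  - right; right; apply Lam_add; assumption.
Qed.

Lemma dist3_shift x q d : dist3 (padd x d) (padd q d) = dist3 x q.
Proof. unfold dist3, padd, px, py, pz; cbn [fst snd]. f_equal; ring. Qed.

Lemma padd_cancel q p : padd (padd q p) (pneg p) = q.
Proof.
  destruct q as [[q1 q2] q3].
  unfold padd, pneg, px, py, pz; cbn [fst snd]. f_equal; [f_equal|]; ring.
Qed.

Lemma voronoi_translate a p x : BCC a p ->
  (voronoi (L3 a) p x <-> voronoi (L3 a) (0, 0, 0) (psub x p)).
Proof.
  intros hp.
  assert (Ex : psub x p = padd x (pneg p)) by reflexivity.
  assert (Ep : (0, 0, 0) = padd p (pneg p))
    by (unfold padd, pneg, px, py, pz; cbn [fst snd]; f_equal; [f_equal|]; ring).
  rewrite Ex, Ep. split.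
  - intros H q hq. rewrite dist3_shift.
    specialize (H _ (L3_add a p q hp hq)).
    rewrite <- (dist3_shift x (padd q p) (pneg p)), padd_cancel in H. exact H.
  - intros H q hq. rewrite <- (dist3_shift x p (pneg p)), <- (dist3_shift x q (pneg p)).
    apply H, L3_add; [apply BCC_neg|]; assumption.
Qed.

(* Volume of an octahedron, computed as an iterated Riemann integral: the z-integral of
   its indicator is an interval length, the y-integral a tent area, the x-integral the
   integral of a squared tent. *)
Lemma is_RInt_split (f : R -> R) a b c l1 l2 l :
  is_RInt f a b l1 -> is_RInt f b c l2 -> l = l1 + l2 -> is_RInt f a c l.
Proof. intros H1 H2 ->. exact (is_RInt_Chasles f a b c l1 l2 H1 H2). Qed.

Lemma is_RInt_const_on (f : R -> R) a b k : a <= b ->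
  (forall x, a < x < b -> f x = k) -> is_RInt f a b ((b - a) * k).
Proof.
  intros Hab H.
  apply is_RInt_ext with (f := fun _ => k).
  - intros x; rewrite Rmin_left, Rmax_right by lra. intros Hx; symmetry; apply H; lra.
  - exact (is_RInt_const a b k).
Qed.

Lemma is_RInt_antiderivative (f F dF : R -> R) a b : a <= b ->
  (forall x, a < x < b -> f x = dF x) ->
  (forall x, is_derive F x (dF x)) -> (forall x, continuous dF x) ->
  is_RInt f a b (F b - F a).
Proof.
  intros Hab H HD HC.
  apply is_RInt_ext with (f := dF).
  - intros x; rewrite Rmin_left, Rmax_right by lra. intros Hx; symmetry; apply H; lra.
  - exact (is_RInt_derive F dF a b (fun x _ => HD x) (fun x _ => HC x)).
Qed.

Lemma integral_indicator (f : R -> R) c a r : 0 < a -> r < a ->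
  (forall z, Rabs (z - c) <= r -> f z = 1) ->
  (forall z, r < Rabs (z - c) -> f z = 0) ->
  is_RInt f (c - a) (c + a) (2 * Rmax 0 r).
Proof.
  intros Ha Hr H1 H0.
  destruct (Rle_or_lt r 0) as [Hn|Hp].
  - apply is_RInt_split with c ((c - (c - a)) * 0) (((c + a) - c) * 0).
    + apply is_RInt_const_on; [lra|]. intros x Hx; apply H0; rabs; lra.
    + apply is_RInt_const_on; [lra|]. intros x Hx; apply H0; rabs; lra.
    + rabs; lra.
  - apply is_RInt_split with (c - r) (((c - r) - (c - a)) * 0) (2 * r).
    + apply is_RInt_const_on; [lra|]. intros x Hx; apply H0; rabs; lra.
    + apply is_RInt_split with (c + r) (((c + r) - (c - r)) * 1) (((c + a) - (c + r)) * 0).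
      * apply is_RInt_const_on; [lra|]. intros x Hx; apply H1; rabs; lra.
      * apply is_RInt_const_on; [lra|]. intros x Hx; apply H0; rabs; lra.
      * ring.
    + rabs; lra.
Qed.

Lemma integral_tent c a s : 0 < a -> s < a ->
  is_RInt (fun y => 2 * Rmax 0 (s - Rabs (y - c))) (c - a) (c + a) (2 * (Rmax 0 s) ^ 2).
Proof.
  intros Ha Hs.
  destruct (Rle_or_lt s 0) as [Hn|Hp].
  - replace (2 * (Rmax 0 s) ^ 2) with (((c + a) - (c - a)) * 0) by (rabs; nra).
    apply is_RInt_const_on; [lra|]. intros x Hx; rabs; lra.
  - apply is_RInt_split with (c - s) (((c - s) - (c - a)) * 0) (2 * s ^ 2).
    + apply is_RInt_const_on; [lra|]. intros x Hx; rabs; lra.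
    + apply is_RInt_split with (c + s) (2 * s ^ 2) (((c + a) - (c + s)) * 0).
      * apply is_RInt_split with c (s ^ 2 - 0) (0 - - s ^ 2).
        ++ replace (s ^ 2 - 0) with ((c - c + s) ^ 2 - (c - s - c + s) ^ 2) by ring.
           apply (is_RInt_antiderivative _ (fun y => (y - c + s) ^ 2)
                    (fun y => 2 * (y - c + s))); [lra| | |].
           ** intros x Hx; rabs; lra.
           ** intros x; auto_derive; auto; ring.
           ** intros x; apply (@ex_derive_continuous R_AbsRing R_NormedModule); auto_derive; auto.
        ++ replace (0 - - s ^ 2) with (- (c + s - (c + s)) ^ 2 - - (c + s - c) ^ 2) by ring.
           apply (is_RInt_antiderivative _ (fun y => - (c + s - y) ^ 2)
                    (fun y => 2 * (c + s - y))); [lra| | |].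
           ** intros x Hx; rabs; lra.
           ** intros x; auto_derive; auto; ring.
           ** intros x; apply (@ex_derive_continuous R_AbsRing R_NormedModule); auto_derive; auto.
        ++ ring.
      * apply is_RInt_const_on; [lra|]. intros x Hx; rabs; lra.
      * ring.
    + rabs; lra.
Qed.

Lemma integral_tent_sq c a r : 0 < r -> r < a ->
  is_RInt (fun x => 2 * (Rmax 0 (r - Rabs (x - c))) ^ 2) (c - a) (c + a) (4 * r ^ 3 / 3).
Proof.
  intros Hr Hra.
  apply is_RInt_split with (c - r) (((c - r) - (c - a)) * 0) (4 * r ^ 3 / 3).
  + apply is_RInt_const_on; [lra|]. intros x Hx; rabs; lra.
  + apply is_RInt_split with (c + r) (4 * r ^ 3 / 3) (((c + a) - (c + r)) * 0).
    * apply is_RInt_split with c (2 * r ^ 3 / 3) (2 * r ^ 3 / 3).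
      -- replace (2 * r ^ 3 / 3) with (2 * (c - c + r) ^ 3 / 3 - 2 * (c - r - c + r) ^ 3 / 3)
           by field.
         apply (is_RInt_antiderivative _ (fun y => 2 * (y - c + r) ^ 3 / 3)
                  (fun y => 2 * (y - c + r) ^ 2)); [lra| | |].
         ++ intros x Hx; rabs; try lra; f_equal; f_equal; lra.
         ++ intros x; auto_derive; auto; field.
         ++ intros x; apply (@ex_derive_continuous R_AbsRing R_NormedModule); auto_derive; auto.
      -- replace (2 * r ^ 3 / 3) with (- 2 * (c + r - (c + r)) ^ 3 / 3 - - 2 * (c + r - c) ^ 3 / 3)
           by field.
         apply (is_RInt_antiderivative _ (fun y => - 2 * (c + r - y) ^ 3 / 3)
                  (fun y => 2 * (c + r - y) ^ 2)); [lra| | |].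
         ++ intros x Hx; rabs; try lra; f_equal; f_equal; lra.
         ++ intros x; auto_derive; auto; field.
         ++ intros x; apply (@ex_derive_continuous R_AbsRing R_NormedModule); auto_derive; auto.
      -- field.
    * apply is_RInt_const_on; [lra|]. intros x Hx; rabs; lra.
    * ring.
  + ring.
Qed.

Lemma RiemannInt_of_is_RInt (f : R -> R) a b l : is_RInt f a b l ->
  exists pr : Riemann_integrable f a b, RiemannInt pr = l.
Proof.
  intros H. exists (ex_RInt_Reals_0 _ _ _ (ex_intro _ l H)).
  rewrite <- RInt_Reals. now apply is_RInt_unique.
Qed.

Lemma vol_octahedron (S : pt -> Prop) c B r : 0 < r < B ->
  (forall y, S y <-> Rabs (px y - px c) + Rabs (py y - py c) + Rabs (pz y - pz c) <= r) ->
  vol3 S c B (4 * r ^ 3 / 3).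
Proof.
  intros [Hr HrB] HS.
  exists (fun x y => 2 * Rmax 0 (r - Rabs (x - px c) - Rabs (y - py c))).
  exists (fun x => 2 * (Rmax 0 (r - Rabs (x - px c))) ^ 2).
  split; [|split].
  - intros x y. apply RiemannInt_of_is_RInt.
    pose proof (Rabs_pos (x - px c)); pose proof (Rabs_pos (y - py c)).
    apply integral_indicator; [lra | lra | |]; intros z Hz; unfold indic;
      destruct excluded_middle_informative as [h|h]; try reflexivity; exfalso.
    + apply h, HS. unfold px, py, pz in *; cbn [fst snd]; lra.
    + apply HS in h. unfold px, py, pz in *; cbn [fst snd] in h; lra.
  - intros x. apply RiemannInt_of_is_RInt, integral_tent; [lra|].
    pose proof (Rabs_pos (x - px c)); lra.
  - apply RiemannInt_of_is_RInt, integral_tent_sq; lra.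
Qed.

Theorem mainTheorem6 (a : R) (ha : 0 < a) :
  (* Voronoi cell of the origin is the octahedron |x|+|y|+|z| <= 5a/16 *)
  (forall x : pt, voronoi (L3 a) (0, 0, 0) x <->
     Rabs (px x) + Rabs (py x) + Rabs (pz x) <= 5 * a / 16) /\
  (* its volume is 125 a^3 / 3072 *)
  vol3 (voronoi (L3 a) (0, 0, 0)) (0, 0, 0) a (125 / 3072 * a ^ 3) /\
  (* the same holds, after translation, for every point of the BCC lattice *)
  (forall p : pt, BCC a p ->
     (forall x : pt, voronoi (L3 a) p x <->
        Rabs (px x - px p) + Rabs (py x - py p) + Rabs (pz x - pz p) <= 5 * a / 16) /\
     vol3 (voronoi (L3 a) p) p a (125 / 3072 * a ^ 3)).
Proof.
  assert (Hvol : 125 / 3072 * a ^ 3 = 4 * (5 * a / 16) ^ 3 / 3) by field.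
  assert (Hr : 0 < 5 * a / 16 < a) by lra.
  assert (Hcell : forall p, BCC a p -> forall x, voronoi (L3 a) p x <->
            Rabs (px x - px p) + Rabs (py x - py p) + Rabs (pz x - pz p) <= 5 * a / 16).
  { intros p hp x. rewrite voronoi_translate, voronoi_origin by assumption. reflexivity. }
  assert (H0 : BCC a (0, 0, 0)).
  { exists 0%Z, 0%Z, 0%Z; left. f_equal; [f_equal|]; ring. }
  rewrite Hvol. split; [|split].
  - intros x. apply voronoi_origin; assumption.
  - apply vol_octahedron; [exact Hr | exact (Hcell _ H0)].
  - intros p hp. split; [exact (Hcell p hp) | apply vol_octahedron; [exact Hr | exact (Hcell p hp)]].
Qed.
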